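(* Let $\rho\in(0,1)$, $\gamma>0$, $T>0$, and let $0<\lambda_1\le\lambda_2\le\cdots$ be positive numbers. Then for all $t\in[0,T]$ and $k\ge1$, $$A_{\rho}(\lambda_k,t)\ge C(\rho,\gamma,\lambda_1)>0,\qquad C(\rho,\gamma,\lambda_1)=\frac{\gamma\sin\rho\pi}{3\pi}\int_0^{\infty}\frac{r^{\rho-1}e^{-rT}}{\frac{r^2}{\lambda_1^2}+\gamma^2r^{2\rho}+1}dr,$$ where $A_{\rho}(\lambda,t)=\frac{\gamma}{\pi}\int_0^{\infty}e^{-rt}\frac{\lambda^2r^{\rho-1}\sin\rho\pi}{(-r+\lambda\gamma r^{\rho}\cos\rho\pi+\lambda)^2+(\lambda\gamma r^{\rho}\sin\rho\pi)^2}dr$.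
   Context: In the paper the $\lambda_k$ are the eigenvalues, arranged non-decreasingly, of a positive self-adjoint operator with compact resolvent on a separable Hilbert space. *)

From HB Require Import structures.
From mathcomp Require Import all_boot all_order all_algebra.
From mathcomp Require Import all_classical all_reals all_analysis.
Set Implicit Arguments. Unset Strict Implicit. Unset Printing Implicit Defensive.
Import Order.TTheory GRing.Theory Num.Theory.
Import numFieldNormedType.Exports.
Local Open Scope classical_set_scope.
Local Open Scope ring_scope.

Definition A_integrand (R : realType) (rho gamma lam t r : R) : R :=
  expR (- (r * t)) *
  (lam ^+ 2 * powR r (rho - 1) * sin (rho * pi)) /
  ((- r + lam * gamma * powR r rho * cos (rho * pi) + lam) ^+ 2
    + (lam * gamma * powR r rho * sin (rho * pi)) ^+ 2).

(* A_rho(lambda,t) = gamma/pi * int_0^oo ... dr  (extended-real valued;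
   the integrand is nonnegative so the Lebesgue integral is well defined). *)
Definition A_rho (R : realType) (rho gamma lam t : R) : \bar R :=
  ((gamma / pi)%:E *
   \int[lebesgue_measure]_(r in `]0%R, +oo[) (A_integrand rho gamma lam t r)%:E)%E.

Definition C_integrand (R : realType) (rho gamma lam1 T r : R) : R :=
  powR r (rho - 1) * expR (- (r * T)) /
  (r ^+ 2 / lam1 ^+ 2 + gamma ^+ 2 * powR r (2 * rho) + 1).

Definition C_const (R : realType) (rho gamma lam1 T : R) : \bar R :=
  ((gamma * sin (rho * pi) / (3 * pi))%:E *
   \int[lebesgue_measure]_(r in `]0%R, +oo[) (C_integrand rho gamma lam1 T r)%:E)%E.

From HB Require Import structures.
From mathcomp Require Import all_boot all_order all_algebra.
From mathcomp Require Import all_classical all_reals all_analysis.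
From mathcomp Require Import measurable_realfun ring lra.
Set Implicit Arguments. Unset Strict Implicit. Unset Printing Implicit Defensive.
Import Order.TTheory GRing.Theory Num.Theory.
Local Open Scope ring_scope.

(* Since cos^2 + sin^2 = 1 and (a + b + c)^2 <= 3 (a^2 + b^2 + c^2), the
   denominator of the A-integrand at lambda >= lambda_1 is at most 3 lambda^2
   times the denominator of the C-integrand at lambda_1 (use r^2 <=
   lambda^2 r^2 / lambda_1^2).  With e^{-rt} >= e^{-rT} this gives the
   pointwise bound (sin(rho pi) / 3) * C-integrand <= A-integrand, which
   integrates to the claim.  C > 0 because its integrand is bounded below by a
   positive constant on [1, 2]. *)

Lemma sqr_add3_le (F : realFieldType) (a b c : F) :
  (a + b + c) ^+ 2 <= 3 * (a ^+ 2 + b ^+ 2 + c ^+ 2).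
Proof.
have := sqr_ge0 (a - b); have := sqr_ge0 (b - c); have := sqr_ge0 (a - c); nra.
Qed.

Lemma A_denominator_le (F : realFieldType) (r l1 l g x c s : F) :
  c ^+ 2 + s ^+ 2 = 1 -> 0 < l1 -> l1 <= l ->
  (- r + l * g * x * c + l) ^+ 2 + (l * g * x * s) ^+ 2
    <= 3 * l ^+ 2 * (r ^+ 2 / l1 ^+ 2 + g ^+ 2 * x ^+ 2 + 1).
Proof.
move=> cs l1_gt0 l1l.
have r2_le : r ^+ 2 <= l ^+ 2 * (r ^+ 2 / l1 ^+ 2).
  rewrite mulrCA ler_peMr ?sqr_ge0 // ler_pdivlMr ?exprn_gt0 // mul1r.
  by rewrite ler_pXn2r // ?nnegrE ltW // (lt_le_trans l1_gt0).
have := sqr_add3_le (- r) (l * g * x * c) l.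
have := sqr_ge0 (l * g * x * s).
rewrite sqrrN !exprMn; nra.
Qed.

Section NonnegIntegrals.
Context d (T : measurableType d) (R : realType) (mu : {measure set T -> \bar R}).
Local Open Scope classical_set_scope.
Local Open Scope ereal_scope.

Lemma measurable_fun_divr_ge0 (f g : T -> R) :
  measurable_fun setT f -> measurable_fun setT g -> (forall x, (0 <= g x)%R) ->
  measurable_fun setT (fun x => (f x / g x)%R).
Proof.
move=> mf mg g_ge0.
have -> : (fun x => f x / g x)%R = (fun x => f x * g x `^ (-1))%R.
  by apply/funext => x; rewrite powR_inv1.
exact: measurable_funM mf (measurableT_comp (measurable_powR _) mg).
Qed.

Lemma integral_gt0_bounded_below (D A : set T) (f : T -> R) (c : R) :
  measurable D -> measurable A -> A `<=` D -> measurable_fun D f ->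
  (forall x, D x -> (0 <= f x)%R) -> (0 < c)%R -> 0 < mu A ->
  (forall x, A x -> (c <= f x)%R) ->
  0 < \int[mu]_(x in D) (f x)%:E.
Proof.
move=> mD mA AD mf f_ge0 c_gt0 muA_gt0 c_le.
have mfE : measurable_fun D (EFin \o f) by exact/measurable_EFinP.
apply: (@lt_le_trans _ _ (\int[mu]_(x in A) c%:E)).
  by rewrite integral_cst // mule_gt0 ?lte_fin.
apply: (@le_trans _ _ (\int[mu]_(x in A) (f x)%:E)).
  apply: ge0_le_integral => //; first by move=> x _; rewrite lee_fin ltW.
  exact: measurable_funS mfE.
by apply: ge0_subset_integral => // x Dx; rewrite lee_fin f_ge0.
Qed.

Lemma ge0_le_integralZ (D : set T) (f g : T -> R) (a b : R) :
  measurable D -> measurable_fun D f -> measurable_fun D g ->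
  (0 <= a)%R -> (0 <= b)%R ->
  (forall x, D x -> (0 <= f x)%R) -> (forall x, D x -> (0 <= g x)%R) ->
  (forall x, D x -> (a * f x <= b * g x)%R) ->
  a%:E * \int[mu]_(x in D) (f x)%:E <= b%:E * \int[mu]_(x in D) (g x)%:E.
Proof.
move=> mD mf mg a_ge0 b_ge0 f_ge0 g_ge0 fg.
rewrite -!ge0_integralZl_EFin //; [|exact/measurable_EFinP..].
apply: ge0_le_integral => //.
- by move=> x Dx; rewrite -EFinM lee_fin mulr_ge0 ?f_ge0.
- by apply/measurable_EFinP; apply: measurable_funM => //; exact: measurable_cst.
- by apply/measurable_EFinP; apply: measurable_funM => //; exact: measurable_cst.
Qed.

End NonnegIntegrals.

Section Integrands.
Variable R : realType.
Implicit Types rho gamma lam t T r : R.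

Lemma sin_rho_pi_gt0 rho : 0 < rho < 1 -> 0 < sin (rho * pi).
Proof.
move=> /andP[rho_gt0 rho_lt1]; apply: sin_gt0_pi.
by rewrite mulr_gt0 ?pi_gt0 //= gtr_pMl ?pi_gt0.
Qed.

Lemma powR_mul2 r rho : 0 <= r -> r `^ (2 * rho) = (r `^ rho) ^+ 2.
Proof. by move=> r_ge0; rewrite mulrC powRrM powR_mulrn ?powR_ge0. Qed.

Lemma C_denominator_ge1 rho gamma lam r :
  1 <= r ^+ 2 / lam ^+ 2 + gamma ^+ 2 * r `^ (2 * rho) + 1.
Proof. by rewrite lerDr addr_ge0 // mulr_ge0 ?invr_ge0 ?sqr_ge0 ?powR_ge0. Qed.

Lemma C_integrand_ge0 rho gamma lam T r : 0 <= C_integrand rho gamma lam T r.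
Proof.
rewrite /C_integrand divr_ge0 ?mulr_ge0 ?powR_ge0 ?expR_ge0 //.
exact: le_trans ler01 (C_denominator_ge1 _ _ _ _).
Qed.

Lemma C_integrand_le_A_integrand rho gamma lam1 lam t T r :
  0 < rho < 1 -> 0 < gamma -> 0 < lam1 -> lam1 <= lam -> t <= T -> 0 < r ->
  sin (rho * pi) / 3 * C_integrand rho gamma lam1 T r
    <= A_integrand rho gamma lam t r.
Proof.
move=> rho01 gamma_gt0 lam1_gt0 lam1_le tT r_gt0.
have s_gt0 := sin_rho_pi_gt0 rho01.
have lam_gt0 : 0 < lam by exact: lt_le_trans lam1_le.
have x_gt0 : 0 < r `^ rho by rewrite powR_gt0.
have Q_gt0 := lt_le_trans ltr01 (C_denominator_ge1 rho gamma lam1 r).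
move: Q_gt0; rewrite /C_integrand /A_integrand (powR_mul2 _ (ltW r_gt0)).
set Q := (_ + _ + 1); set D := (_ ^+ 2 + _ ^+ 2); move=> Q_gt0.
have D_gt0 : 0 < D by rewrite ltr_wpDl ?sqr_ge0 // exprn_gt0 // !mulr_gt0.
have D_le : D <= 3 * lam ^+ 2 * Q by apply: A_denominator_le; rewrite ?cos2Dsin2.
have exp_le : expR (- (r * T)) <= expR (- (r * t)).
  by rewrite ler_expR lerN2 ler_wpM2l // ltW.
set N := lam ^+ 2 * _ * _.
have N_ge0 : 0 <= N by rewrite !mulr_ge0 ?sqr_ge0 ?powR_ge0 // ltW.
have -> : sin (rho * pi) / 3 * (r `^ (rho - 1) * expR (- (r * T)) / Q)
    = expR (- (r * T)) * N / (3 * lam ^+ 2 * Q).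
  by rewrite /N; field; rewrite !gt_eqF.
apply: (@le_trans _ _ (expR (- (r * T)) * N / D)).
  apply: ler_wpM2l; first by rewrite mulr_ge0 ?expR_ge0.
  by rewrite lef_pV2 ?posrE // !mulr_gt0 ?exprn_gt0.
apply: ler_wpM2r; first by rewrite invr_ge0 ltW.
exact: ler_wpM2r.
Qed.

Lemma A_integrand_ge0 rho gamma lam t r :
  0 < rho < 1 -> 0 < gamma -> 0 < lam -> 0 < r -> 0 <= A_integrand rho gamma lam t r.
Proof.
move=> rho01 gamma_gt0 lam_gt0 r_gt0.
apply: le_trans (C_integrand_le_A_integrand rho01 gamma_gt0 lam_gt0 (lexx lam) (lexx t) r_gt0).
by rewrite mulr_ge0 ?C_integrand_ge0 // divr_ge0 // ltW // sin_rho_pi_gt0.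
Qed.

Ltac measurable_arith := repeat first
  [ exact: measurable_cst | exact: measurable_id | exact: measurable_powR
  | exact: measurable_expR | apply: measurable_funD | apply: measurable_funM
  | apply: measurable_funN | apply: measurable_funX
  | apply: (measurableT_comp (@measurable_expR _)) ].

Lemma measurable_C_integrand rho gamma lam T :
  measurable_fun setT (C_integrand rho gamma lam T).
Proof.
apply: measurable_fun_divr_ge0; try measurable_arith.
by move=> r; exact: le_trans ler01 (C_denominator_ge1 _ _ _ _).
Qed.

Lemma measurable_A_integrand rho gamma lam t :
  measurable_fun setT (A_integrand rho gamma lam t).
Proof.
apply: measurable_fun_divr_ge0; try measurable_arith.
by move=> r; rewrite addr_ge0 ?sqr_ge0.
Qed.

Lemma C_integrand_bounded_below rho gamma lam T :
  0 <= rho <= 1 -> 0 <= T ->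
  exists2 c, 0 < c & forall r, 1 <= r <= 2 -> c <= C_integrand rho gamma lam T r.
Proof.
move=> /andP[rho_ge0 rho_le1] T_ge0.
set K := 4 / lam ^+ 2 + gamma ^+ 2 * 4 + 1.
have K_gt0 : 0 < K by rewrite ltr_wpDl // addr_ge0 // mulr_ge0 ?invr_ge0 ?sqr_ge0.
exists (2^-1 * expR (- (2 * T)) / K); first by rewrite !mulr_gt0 ?expR_gt0 ?invr_gt0.
move=> r /andP[r_ge1 r_le2].
have r_gt0 : 0 < r by exact: lt_le_trans ltr01 r_ge1.
have r2_le4 : r ^+ 2 <= 4 by nra.
have denom_le : r ^+ 2 / lam ^+ 2 + gamma ^+ 2 * r `^ (2 * rho) + 1 <= K.
  rewrite lerD2r lerD ?ler_wpM2r ?invr_ge0 ?sqr_ge0 // ler_wpM2l ?sqr_ge0 //.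
  apply: le_trans r2_le4; rewrite -powR_mulrn ?(ltW r_gt0) //.
  by apply: ler_powR => //; rewrite -[2%:R]/2; nra.
have pow_ge : 2^-1 <= r `^ (rho - 1).
  apply: (@le_trans _ _ (r `^ (-1))); last by apply: ler_powR => //; lra.
  by rewrite powR_inv1 ?(ltW r_gt0) // lef_pV2 ?posrE.
have exp_ge : expR (- (2 * T)) <= expR (- (r * T)).
  by rewrite ler_expR lerN2 ler_wpM2r.
rewrite /C_integrand; apply: (@le_trans _ _ (2^-1 * expR (- (2 * T)) /
   (r ^+ 2 / lam ^+ 2 + gamma ^+ 2 * r `^ (2 * rho) + 1))).
  apply: ler_wpM2l; first by rewrite mulr_ge0 ?expR_ge0.
  by rewrite lef_pV2 ?posrE // (lt_le_trans ltr01 (C_denominator_ge1 _ _ _ _)).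
by rewrite ler_wpM2r ?invr_ge0 ?(le_trans ler01 (C_denominator_ge1 _ _ _ _)) // ler_pM.
Qed.

Lemma C_integral_gt0 rho gamma lam T :
  0 <= rho <= 1 -> 0 <= T ->
  (0 < \int[lebesgue_measure]_(r in `]0%R, +oo[) (C_integrand rho gamma lam T r)%:E)%E.
Proof.
move=> rho01 T_ge0.
have [c c_gt0 c_le] := C_integrand_bounded_below gamma lam rho01 T_ge0.
apply: (@integral_gt0_bounded_below _ _ R lebesgue_measure _ `[1%R, 2%R]%classic
  (C_integrand rho gamma lam T) c).
- exact: measurable_itv.
- exact: measurable_itv.
- by move=> r /=; rewrite !in_itv /= andbT => /andP[r_ge1 _]; exact: lt_le_trans ltr01 r_ge1.
- exact: measurable_funS (measurable_C_integrand _ _ _ _).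
- by move=> r _; exact: C_integrand_ge0.
- exact: c_gt0.
- have := @lebesgue_measure_itv R `[1%R, 2%R]; rewrite /= lte_fin ltr1n => ->.
  by rewrite -EFinD lte_fin subr_gt0 ltr1n.
- by move=> r /=; rewrite in_itv /=; exact: c_le.
Qed.

Lemma C_const_gt0 rho gamma lam T :
  0 < rho < 1 -> 0 < gamma -> 0 <= T -> (0 < C_const rho gamma lam T)%E.
Proof.
move=> rho01 gamma_gt0 T_ge0.
rewrite /C_const mule_gt0 ?lte_fin ?divr_gt0 ?mulr_gt0 ?sin_rho_pi_gt0 ?pi_gt0 //.
by case/andP: rho01 => /ltW rho_ge0 /ltW rho_le1; apply: C_integral_gt0; rewrite ?rho_ge0.
Qed.

Lemma C_const_le_A_rho rho gamma lam1 lam t T :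
  0 < rho < 1 -> 0 < gamma -> 0 < lam1 -> lam1 <= lam -> t <= T ->
  (C_const rho gamma lam1 T <= A_rho rho gamma lam t)%E.
Proof.
move=> rho01 gamma_gt0 lam1_gt0 lam1_le tT.
have pi_gt0 : 0 < pi :> R := pi_gt0 R.
have s_gt0 := sin_rho_pi_gt0 rho01.
have mD : measurable (`]0%R, +oo[%classic : set R) by exact: measurable_itv.
apply: ge0_le_integralZ => //.
- exact: measurable_funS (measurable_C_integrand _ _ _ _).
- exact: measurable_funS (measurable_A_integrand _ _ _ _).
- by rewrite !divr_ge0 ?mulr_ge0 // ltW.
- by rewrite divr_ge0 // ltW.
- by move=> r _; exact: C_integrand_ge0.
- move=> r; rewrite /= in_itv /= andbT => r_gt0.
  exact: A_integrand_ge0 (lt_le_trans lam1_gt0 lam1_le) r_gt0.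
- move=> r; rewrite /= in_itv /= andbT => r_gt0.
  have -> : gamma * sin (rho * pi) / (3 * pi) = gamma / pi * (sin (rho * pi) / 3).
    by rewrite invfM; ring.
  rewrite -mulrA; apply: ler_wpM2l; first by rewrite divr_ge0 // ltW.
  exact: C_integrand_le_A_integrand.
Qed.

End Integrands.

(* lam k represents lambda_{k+1}; so lambda_1 = lam 0. *)
Theorem lemma2p4 (R : realType) (rho gamma T : R) (lam : nat -> R)
  (hrho0 : 0 < rho) (hrho1 : rho < 1) (hgamma : 0 < gamma) (hT : 0 < T)
  (hlam0 : 0 < lam 0%N) (hmono : forall k : nat, lam k <= lam k.+1) :
  (0 < C_const rho gamma (lam 0%N) T)%E /\
  (forall (t : R) (k : nat), 0 <= t -> t <= T ->
     (C_const rho gamma (lam 0%N) T <= A_rho rho gamma (lam k) t)%E).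
Proof.
have rho01 : 0 < rho < 1 by rewrite hrho0 hrho1.
split; first exact: C_const_gt0 rho01 hgamma (ltW hT).
move=> t k _ tT.
have lam_ge : lam 0%N <= lam k by exact: (nondecreasing_seqP lam).1 hmono 0%N k (leq0n k).
exact: C_const_le_A_rho rho01 hgamma hlam0 lam_ge tT.
Qed.
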